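(* The continuous density $f$ of the limiting Quicksort random variable $Y$ satisfies $f(x)>0$ for every $x\in\mathbb{R}$.
   Context: Let $g(u):=2u\ln u+2(1-u)\ln(1-u)+1$ for $u\in(0,1)$. The limiting Quicksort random variable $Y$ is the limit in distribution of $(X_n-\mathbf{E}X_n)/n$, where $X_n$ is the number of comparisons used by randomized Quicksort on $n$ distinct numbers; equivalently, its law is the unique law with $\mathbf{E}Y=0$ and finite variance satisfying $Y\overset{d}{=}UY+(1-U)Z+g(U)$, where on the right $U,Y,Z$ are independent, $Z\overset{d}{=}Y$ and $U$ is uniform on $(0,1)$. $Y$ has a continuous (indeed infinitely differentiable) density $f$. *)

From HB Require Import structures.
From mathcomp Require Import all_boot all_order all_algebra.
From mathcomp Require Import all_classical all_reals all_analysis.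
Set Implicit Arguments. Unset Strict Implicit. Unset Printing Implicit Defensive.
Import Order.TTheory GRing.Theory Num.Theory.
Import numFieldNormedType.Exports.
Local Open Scope classical_set_scope.
Local Open Scope ring_scope.

Definition quick_g (R : realType) (u : R) : R :=
  2 * u * ln u + 2 * (1 - u) * ln (1 - u) + 1.

(* The law mu of Y (a probability on the Borel sets of R) is the
   limiting Quicksort law: E Y = 0, Var Y < oo, and
   Y =d U Y + (1-U) Z + g(U) with U ~ Unif(0,1), Y, Z ~ mu, all independent,
   i.e. for every Borel set A,
   mu A = P(U Y + (1-U) Z + g U \in A)
        = int_0^1 int int 1_A(u y + (1-u) z + g u) dmu(z) dmu(y) du. *)
Definition quicksort_law (R : realType) (mu : probability R R) : Prop :=
  mu.-integrable setT (fun x : R => (x ^+ 2)%:E) /\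
  (\int[mu]_x (x%:E) = 0)%E /\
  forall A : set R, measurable A ->
    mu A =
    (\int[@lebesgue_measure R]_(u in `]0%R, 1%R[%classic)
       \int[mu]_y \int[mu]_z
          (\1_A (u * y + (1 - u) * z + quick_g u) : R)%:E)%E.

Definition is_density (R : realType) (mu : probability R R) (f : R -> R) : Prop :=
  forall A : set R, measurable A ->
    mu A = (\int[@lebesgue_measure R]_(x in A) (f x)%:E)%E.

(* Being a continuous density, f is nonnegative and positive at some point a.
   The fixed-point equation Y = U Y + (1-U) Z + g(U) transports mass: if Y and Z
   both land near a and U lands near u, then Y lands near a + g(u), and the mass
   of every small window around a + g(u) is at least proportional to its width;
   by continuity f(a + g(u)) > 0.  As g(1/2) < 0 < g(1/16), the values g(u),
   0 < u < 1, fill an interval [-del, del], so positivity spreads from a to all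
   of R in steps of size del. *)

From HB Require Import structures.
From mathcomp Require Import all_boot all_order all_algebra.
From mathcomp Require Import all_classical all_reals all_analysis.
From mathcomp Require Import ring lra.
Set Implicit Arguments. Unset Strict Implicit. Unset Printing Implicit Defensive.
Import Order.TTheory GRing.Theory Num.Theory.
Import numFieldNormedType.Exports.
Local Open Scope ring_scope.
Local Open Scope classical_set_scope.

Section nonneg_integral_bounds.
Local Open Scope ereal_scope.
Context d (T : measurableType d) (R : realType) {nu : {measure set T -> \bar R}}.

(* No measurability is needed (the iterated integrals of [quicksort_law] are not
   known to be measurable): the integral of a nonnegative function is the
   supremum of the integrals of its simple minorants. *)
Lemma ge0_le_integral_nonmeas {D : set T} {h1 h2 : T -> \bar R} :
  (forall x, D x -> 0 <= h1 x) -> (forall x, D x -> h1 x <= h2 x) ->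
  \int[nu]_(x in D) h1 x <= \int[nu]_(x in D) h2 x.
Proof.
move=> h10 h12.
have h20 x : D x -> 0 <= h2 x by move=> Dx; exact: le_trans (h10 _ Dx) (h12 _ Dx).
rewrite (ge0_integralE _ h10) (ge0_integralE _ h20).
apply: ereal_sup_le => _ [s s_le <-]; exists s => // x.
apply: le_trans (s_le x) _; rewrite /patch; case: ifP => // /set_mem; exact: h12.
Qed.

Lemma integral_ge_mass (D B : set T) (h : T -> \bar R) (k c : R) :
  measurable D -> measurable B -> (0 <= k)%R -> c%:E <= nu (B `&` D) ->
  (forall x, D x -> 0 <= h x) -> (forall x, D x -> B x -> k%:E <= h x) ->
  (k * c)%:E <= \int[nu]_(x in D) h x.
Proof.
move=> mD mB k0 c_le h0 hk.
have kB_le x : D x -> (k * \1_B x)%:E <= h x.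
  move=> Dx; rewrite indicE; have [Bx|_] := boolP (x \in B).
    by rewrite mulr1; apply: hk => //; rewrite -in_setE.
  by rewrite mulr0; exact: h0.
have kB0 x : D x -> 0 <= (k * \1_B x)%:E.
  by move=> _; rewrite lee_fin mulr_ge0 // indicE ler0n.
apply: le_trans _ (ge0_le_integral_nonmeas kB0 kB_le).
rewrite (@integralZl_indic _ _ _ _ _ mD (fun=> B)) //; last first.
  by move=> /(le_lt_trans k0); rewrite ltxx.
by rewrite integral_indic // EFinM; exact: lee_wpmul2l.
Qed.

Lemma ge0_integral_le_cst (D : set T) (h : T -> \bar R) (M : R) :
  measurable D -> (forall x, D x -> 0 <= h x <= M%:E) ->
  \int[nu]_(x in D) h x <= M%:E * nu D.
Proof.
move=> mD hM; rewrite -integral_cst //.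
apply: ge0_le_integral_nonmeas => x /hM /andP[] //.
Qed.

Lemma integral_le_Ncst (D : set T) (h : T -> R) (c : R) :
  measurable D -> (0 <= c)%R -> (forall x, D x -> h x <= - c)%R ->
  \int[nu]_(x in D) (h x)%:E <= - (c%:E * nu D).
Proof.
move=> mD c0 hc; rewrite integralE.
have -> : \int[nu]_(x in D) ((EFin \o h)^\+ x) = 0.
  apply: integral0_eq => x /hc hx; rewrite funeposE; apply/max_idPr.
  by rewrite lee_fin; lra.
rewrite sub0e leeN2 -integral_cst //.
apply: ge0_le_integral_nonmeas => [x _|x /hc hx]; first by rewrite lee_fin.
by rewrite funenegE le_max lee_fin; apply/orP; left; lra.
Qed.

End nonneg_integral_bounds.

Lemma lebesgue_measure_oitv (R : realType) (a b : R) : a < b ->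
  (@lebesgue_measure R `]a, b[%classic = (b - a)%:E)%E.
Proof. by move=> ab; rewrite lebesgue_measure_itv /= lte_fin ab EFinB. Qed.

Lemma continuous_near_itv (R : realType) (h : R -> R) (x e : R) :
  {for x, continuous h} -> 0 < e ->
  exists2 r, 0 < r & forall y, x - r < y < x + r -> h x - e < h y < h x + e.
Proof.
move=> hx e0; have /cvgrPdist_lt /(_ e e0) /nbhs_ballP [r /= r0 hr] := hx.
by exists r => // y xy; rewrite -ltr_distlC; apply: hr; rewrite /ball /= ltr_distlC.
Qed.

Lemma integral_indic_affine (R : realType) (nu : {measure set R -> \bar R})
    (s t a b : R) : 0 < s ->
  (\int[nu]_z (\1_`]a, b[%classic (s * z + t) : R)%:E =
   nu `]((a - t) / s)%R, ((b - t) / s)%R[%classic)%E.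
Proof.
move=> s0; rewrite -(setIT `]((a - t) / s)%R, ((b - t) / s)%R[) -integral_indic //.
apply: eq_integral => z _; rewrite !indicE !mem_setE !in_itv /=.
by rewrite ltr_pdivrMr // ltr_pdivlMr // [z * s]mulrC ltrBlDr ltrBrDr.
Qed.

Lemma quick_g_continuous (R : realType) (u : R) : 0 < u < 1 ->
  {for u, continuous (@quick_g R)}.
Proof.
move=> /andP[u0 u1]; have cont_1B : continuous (fun v : R => 1 - v).
  by move=> v; apply: cvgB; [exact: cvg_cst | exact: cvg_id].
apply: cvgD; last exact: cvg_cst.
apply: cvgD; apply: cvgM.
- by apply: cvgM; [exact: cvg_cst | exact: cvg_id].
- exact: continuous_ln.
- by apply: cvgM; [exact: cvg_cst | exact: cont_1B].
- by apply: continuous_comp; [exact: cont_1B | apply: continuous_ln; rewrite subr_gt0].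
Qed.

Lemma quick_g_half_lt0 (R : realType) : @quick_g R (1 / 2) < 0.
Proof.
have half_eq : (1 / 2 : R) = (1 + (-1 / 4)) * (1 + (-1 / 3)) by lra.
have ln_half : ln (1 / 2 : R) <= -1 / 4 + -1 / 3.
  rewrite half_eq lnM ?posrE; try lra.
  by apply: lerD; apply: le_ln1Dx; lra.
rewrite /quick_g (_ : 1 - 1 / 2 = 1 / 2 :> R); lra.
Qed.

Lemma quick_g_sixteenth_gt0 (R : realType) : 0 < @quick_g R (1 / 16).
Proof.
have ln2 : ln (2 : R) <= 1 by have := @le_ln1Dx R 1 ltac:(lra); rewrite -[1 + 1]/2.
have ln_16 : ln (1 / 16 : R) = - (4 * ln 2).
  rewrite (_ : 1 / 16 = (2 ^+ 4)^-1); last by rewrite -exprVn; lra.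
  by rewrite lnV ?posrE ?exprn_gt0 // lnXn // mulr_natl.
have ln_15_16 : - (1 / 15) <= ln (1 - 1 / 16 : R).
  rewrite (_ : 1 - 1 / 16 = (1 + 1 / 15)^-1); last by field.
  by rewrite lnV ?posrE ?lerN2; [apply: le_ln1Dx|]; lra.
rewrite /quick_g; lra.
Qed.

Lemma quick_g_onto_small (R : realType) : exists2 del : R, 0 < del &
  forall t, - del <= t <= del -> exists2 u, 0 < u < 1 & quick_g u = t.
Proof.
have g_lo := @quick_g_half_lt0 R; have g_hi := @quick_g_sixteenth_gt0 R.
pose del : R := Num.min (- quick_g (1 / 2)) (quick_g (1 / 16)).
have del_lo : del <= - quick_g (1 / 2) by rewrite ge_min lexx.
have del_hi : del <= quick_g (1 / 16) by rewrite ge_min lexx orbT.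
exists del => [|t /andP[t_lo t_hi]]; first by rewrite lt_min oppr_gt0 g_lo g_hi.
have g_cont : {within `[1 / 16, 1 / 2], continuous (@quick_g R)}.
  apply: continuous_in_subspaceT => u; rewrite in_setE /= in_itv /= => /andP[u1 u2].
  by apply: quick_g_continuous; apply/andP; split; lra.
have t_between : Num.min (quick_g (1 / 16)) (quick_g (1 / 2)) <= t <=
                 Num.max (quick_g (1 / 16)) (quick_g (1 / 2)).
  by rewrite ge_min le_max; apply/andP; split; apply/orP; [right|left]; lra.
have [|u] := IVT _ g_cont t_between; first lra.
by rewrite in_itv /= => /andP[u_lo u_hi] gu; exists u => //; apply/andP; split; lra.
Qed.

Lemma propagate_by_small_steps (R : archiFieldType) (P : R -> Prop) (a del : R) :
  0 < del -> P a -> (forall b t, P b -> - del <= t <= del -> P (b + t)) ->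
  forall x, P x.
Proof.
move=> del0 Pa step.
have P_near n : forall y, `|y - a| <= n%:R * del -> P y.
  elim: n => [|n IHn] y.
    by rewrite mul0r normr_le0 subr_eq0 => /eqP ->.
  rewrite -natr1 mulrDl mul1r ler_norml => /andP[y_lo y_hi].
  have [y_far|y_le] := ltrP del (y - a).
    rewrite -(subrK del y); apply: step; last by apply/andP; lra.
    by apply: IHn; rewrite ler_norml; apply/andP; lra.
  have [y_far|y_ge] := ltrP (y - a) (- del).
    rewrite -(addrK del y); apply: step; last by apply/andP; lra.
    by apply: IHn; rewrite ler_norml; apply/andP; lra.
  by rewrite -(subrKC a y); apply: step => //; apply/andP.
move=> x; apply: (P_near (Num.bound (`|x - a| / del))).
rewrite -ler_pdivrMr //; apply: ltW; apply: archi_boundP.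
by rewrite divr_ge0 // ltW.
Qed.

Lemma quicksort_law_mass_ge (R : realType) (mu : probability R R) (A : set R)
    (u1 u2 y1 y2 k c : R) : quicksort_law mu -> measurable A ->
  0 <= u1 -> u1 < u2 -> u2 <= 1 -> 0 <= k -> 0 <= c -> (c%:E <= mu `]y1, y2[)%E ->
  (forall u y, u1 < u < u2 -> y1 < y < y2 ->
     (k%:E <= \int[mu]_z (\1_A (u * y + (1 - u) * z + quick_g u) : R)%:E)%E) ->
  ((k * c * (u2 - u1))%:E <= mu A)%E.
Proof.
move=> [_ [_ mu_fixpoint]] mA u10 u12 u21 k0 c0 c_le k_le; rewrite mu_fixpoint //.
apply: (integral_ge_mass (nu := @lebesgue_measure R) (B := `]u1, u2[%classic)).
- exact: measurable_itv.
- exact: measurable_itv.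
- exact: mulr_ge0.
- rewrite setIidl; first by rewrite [X in (_ <= X)%E]lebesgue_measure_oitv.
  by move=> u /=; rewrite !in_itv /= => /andP[u1u uu2]; apply/andP; split; lra.
- by move=> u _; do 2 apply: integral_ge0 => ? _; rewrite lee_fin.
move=> u _ /=; rewrite in_itv /= => u_in.
apply: (integral_ge_mass (nu := mu) (B := `]y1, y2[%classic)) => //.
- by rewrite setIT.
- by move=> y _; apply: integral_ge0 => ? _; rewrite lee_fin.
by move=> y _ /=; rewrite in_itv /=; exact: k_le.
Qed.

Section density.
Variables (R : realType) (mu : probability R R) (f : R -> R).
Hypothesis f_density : is_density mu f.

Lemma density_oitv_ge (a b eta : R) : a < b -> 0 <= eta ->
  (forall x, a < x < b -> eta <= f x) ->
  ((eta * (b - a))%:E <= mu `]a, b[)%E.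
Proof.
move=> ab eta0 f_ge; rewrite f_density; last exact: measurable_itv.
rewrite EFinM -lebesgue_measure_oitv // -integral_cst; last exact: measurable_itv.
apply: ge0_le_integral_nonmeas => [x _|x]; first by rewrite lee_fin.
by rewrite /= in_itv /= lee_fin => /f_ge.
Qed.

Lemma density_oitv_le (a b M : R) : a < b ->
  (forall x, a < x < b -> 0 <= f x <= M) ->
  (mu `]a, b[ <= (M * (b - a))%:E)%E.
Proof.
move=> ab f_le; rewrite f_density; last exact: measurable_itv.
rewrite EFinM -lebesgue_measure_oitv //.
apply: ge0_integral_le_cst; first exact: measurable_itv.
by move=> x; rewrite /= in_itv /= !lee_fin => /f_le.
Qed.

Lemma density_affine_window (a r eta x eps s t : R) :
  0 <= eta -> (forall z, a - r < z < a + r -> eta <= f z) -> 0 < eps -> 0 < s <= 1 ->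
  s * (a - r) <= x - eps - t -> x + eps - t <= s * (a + r) ->
  ((2 * eta * eps)%:E <=
   \int[mu]_z (\1_`](x - eps)%R, (x + eps)%R[ (s * z + t) : R)%:E)%E.
Proof.
move=> eta0 f_ge eps0 /andP[s0 s1]; rewrite -ler_pdivrMl // -ler_pdivlMl // => lo_ge hi_le.
rewrite integral_indic_affine //.
have width : (x + eps - t) / s - (x - eps - t) / s = 2 * eps / s.
  by rewrite -mulrBl; congr (_ / _); lra.
have lo_hi : (x - eps - t) / s < (x + eps - t) / s.
  by rewrite -subr_gt0 width divr_gt0 //; lra.
apply: le_trans (density_oitv_ge lo_hi eta0 _); last first.
  by move=> z /andP[z_lo z_hi]; apply: f_ge; apply/andP; lra.
have eps_le : 2 * eps <= 2 * eps / s by rewrite ler_pdivlMr //; nra.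
by rewrite lee_fin width; have := ler_wpM2l eta0 eps_le; lra.
Qed.

Hypothesis f_cont : continuous f.

Lemma density_ge0 (x : R) : 0 <= f x.
Proof.
rewrite leNgt; apply/negP => fx_lt0.
have fx2 : 0 < - f x / 2 by lra.
have [r r0 f_lt] := continuous_near_itv (@f_cont x) fx2.
have : (mu `](x - r)%R, (x + r)%R[ <= - (- f x / 2 * (x + r - (x - r)))%:E)%E.
  rewrite f_density; last exact: measurable_itv.
  apply: le_trans (integral_le_Ncst _ (ltW fx2) _) _.
  - exact: measurable_itv.
  - by move=> y /=; rewrite in_itv /= => /f_lt /andP[_]; lra.
  - by rewrite [X in (_ * X)%E]lebesgue_measure_oitv ?EFinM //; lra.
apply/negP; rewrite -ltNge; apply: lt_le_trans (measure_ge0 _ _).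
by rewrite lte_fin oppr_lt0; apply: mulr_gt0; lra.
Qed.

Lemma density_gt0_of_mass (x K e0 : R) : 0 < K -> 0 < e0 ->
  (forall eps, 0 < eps <= e0 ->
     ((K * eps)%:E <= mu `](x - eps)%R, (x + eps)%R[)%E) ->
  0 < f x.
Proof.
move=> K0 e00 mass_ge; rewrite ltNge; apply/negP => fx_le0.
have K4 : 0 < K / 4 by lra.
have [r r0 f_lt] := continuous_near_itv (@f_cont x) K4.
pose eps := Num.min r e0.
have eps0 : 0 < eps by rewrite lt_min r0 e00.
have eps_r : eps <= r by rewrite ge_min lexx.
have mass_le : (mu `](x - eps)%R, (x + eps)%R[ <= (K / 4 * (x + eps - (x - eps)))%:E)%E.
  apply: density_oitv_le => [|y /andP[y1 y2]]; first lra.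
  rewrite density_ge0 /=; have /f_lt /andP[_] : x - r < y < x + r by apply/andP; lra.
  lra.
have eps_e0 : 0 < eps <= e0 by rewrite eps0 ge_min lexx orbT.
have := le_trans (mass_ge _ eps_e0) mass_le; rewrite lee_fin.
have : 0 < K * eps by exact: mulr_gt0.
lra.
Qed.

Lemma exists_density_gt0 : exists a, 0 < f a.
Proof.
apply: contrapT => /forallNP f_le0.
have f0 y : f y = 0 by apply/eqP; rewrite eq_le density_ge0 andbT leNgt; exact/negP.
have := probability_setT mu; rewrite f_density // integral0_eq => [|y _]; last by rewrite f0.
by move=> /eqP; rewrite eq_sym onee_eq0.
Qed.

Hypothesis mu_quicksort : quicksort_law mu.

Lemma quicksort_mass_near_shift (a u0 : R) : 0 < f a -> 0 < u0 < 1 ->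
  exists2 K, 0 < K & exists2 e0, 0 < e0 & forall eps, 0 < eps <= e0 ->
    ((K * eps)%:E <= mu `](a + quick_g u0 - eps)%R, (a + quick_g u0 + eps)%R[)%E.
Proof.
(* For u within rho of u0 and y within delta of a, the z-window that the map
   z |-> u y + (1 - u) z + g u sends into ]x - eps, x + eps[, x = a + g u0,
   has width 2 eps / (1 - u) >= 2 eps and lies where f >= eta. *)
move=> fa0 u0_in; have /andP[u0_gt0 u0_lt1] := u0_in.
pose m := 1 - u0; have m_def : m = 1 - u0 by [].
pose eta := f a / 2; have eta_def : eta = f a / 2 by [].
have m_gt0 : 0 < m by rewrite subr_gt0.
have eta_gt0 : 0 < eta by rewrite divr_gt0.
have [r r_gt0 f_near_a] := continuous_near_itv (@f_cont a) eta_gt0.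
have f_ge z : a - r < z < a + r -> eta <= f z by move/f_near_a/andP => [+ _]; lra.
pose delta := m * r / 8; have delta_def : delta = m * r / 8 by [].
have delta_gt0 : 0 < delta by rewrite divr_gt0 ?mulr_gt0.
have [rho1 rho1_gt0 g_near] := continuous_near_itv (quick_g_continuous u0_in) delta_gt0.
pose rho := Num.min rho1 (Num.min (m / 2) u0).
have rho_gt0 : 0 < rho by rewrite !lt_min rho1_gt0 u0_gt0 divr_gt0.
have [rho_rho1 rho_m rho_u0] : [/\ rho <= rho1, rho <= m / 2 & rho <= u0].
  by split; rewrite !ge_min lexx ?orbT.
have delta_r : delta < r.
  have : m * r < 1 * r by rewrite ltr_pM2r //; lra.
  lra.
pose c := eta * (a + delta - (a - delta)).
have c_le : (c%:E <= mu `](a - delta)%R, (a + delta)%R[)%E.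
  apply: density_oitv_ge => [||z /andP[z_lo z_hi]]; [lra | exact: ltW |].
  by apply: f_ge; apply/andP; lra.
exists (2 * eta * c * (2 * rho)).
  by rewrite !mulr_gt0 //; lra.
exists (m * r / 4) => [|eps /andP[eps_gt0 eps_le]]; first by rewrite divr_gt0 ?mulr_gt0.
have -> : 2 * eta * c * (2 * rho) * eps = 2 * eta * eps * c * (u0 + rho - (u0 - rho)).
  by ring.
apply: (quicksort_law_mass_ge mu_quicksort (measurable_itv _) _ _ _ _ _ c_le); try lra.
- by apply: mulr_ge0; lra.
- by apply: mulr_ge0; lra.
move=> u y /andP[u_lo u_hi] /andP[y_lo y_hi].
have /g_near /andP[g_lo g_hi] : u0 - rho1 < u < u0 + rho1 by apply/andP; lra.
have uy : - delta < u * (a - y) < delta by apply/andP; nra.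
have s_r : m / 2 * r <= (1 - u) * r by rewrite ler_pM2r //; lra.
under eq_integral do rewrite -[u * y + _ + _]addrA [u * y + _]addrCA.
by apply: density_affine_window; [exact: ltW|exact: f_ge|done|apply/andP|..]; lra.
Qed.

Lemma density_gt0_shift (a u : R) : 0 < f a -> 0 < u < 1 -> 0 < f (a + quick_g u).
Proof.
move=> fa0 u_in; have [K K_gt0 [e0 e0_gt0 mass_ge]] := quicksort_mass_near_shift fa0 u_in.
exact: density_gt0_of_mass K_gt0 e0_gt0 mass_ge.
Qed.

End density.

Theorem corollary4p2 (R : realType) (mu : probability R R) (f : R -> R) :
  quicksort_law mu -> continuous f -> is_density mu f ->
  forall x : R, 0 < f x.
Proof.
move=> mu_quicksort f_cont f_density.
have [a fa_gt0] := exists_density_gt0 f_density f_cont.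
have [del del_gt0 g_onto] := @quick_g_onto_small R.
apply: (propagate_by_small_steps del_gt0 fa_gt0) => b _ fb_gt0 /g_onto [u u_in <-].
exact (density_gt0_shift f_density f_cont mu_quicksort fb_gt0 u_in).
Qed.
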